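(* Let $V$ be a finite nonempty set, $U\subseteq V$, $\hat x$ a maximally specific partial function on $P_V$, $\hat x'=\hat x|_{P_U}$, and $y\in X_U[\hat x']$. Then, with $\tau^y_{\mathrm{out}},\tau^y_{\mathrm{in}},\tau^y_{\mathrm{bd}}$ as defined in the context: (1) For $\tau=\tau^y_{\mathrm{out}}$, let $P'_{01}=\{pq\in(V\setminus U)\times U\mid\exists r\in U:\hat x_{pr}\neq0\wedge y_{rq}=1\}\setminus\hat x^{-1}(1)$, $P'_{10}=P''_{10}=(U\times(V\setminus U))\setminus\hat x^{-1}(0)$ and $P''_{01}=((V\setminus U)\times U)\setminus\hat x^{-1}(1)$. Then $P_{01}[\tau]\cap\delta(U)\subseteq P'_{01}\subseteq P''_{01}$ and $P_{10}[\tau]\cap\delta(U)\subseteq P'_{10}=P''_{10}$. (2) For $\tau=\tau^y_{\mathrm{in}}$, let $P'_{01}=\{pq\in U\times(V\setminus U)\mid\exists r\in U: y_{pr}=1\wedge\hat x_{rq}\neq0\}\setminus\hat x^{-1}(1)$, $P'_{10}=P''_{10}=((V\setminus U)\times U)\setminus\hat x^{-1}(0)$ and $P''_{01}=(U\times(V\setminus U))\setminus\hat x^{-1}(1)$. Then $P_{01}[\tau]\cap\delta(U)\subseteq P'_{01}\subseteq P''_{01}$ and $P_{10}[\tau]\cap\delta(U)\subseteq P'_{10}=P''_{10}$. (3) For $\tau=\tau^y_{\mathrm{bd}}$, let $P'_{01}=P''_{01}=\emptyset$ and $P'_{10}=P''_{10}=\delta(U)\setminus\hat x^{-1}(0)$.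 Then $P_{01}[\tau]\cap\delta(U)\subseteq P'_{01}=P''_{01}$ and $P_{10}[\tau]\cap\delta(U)\subseteq P'_{10}=P''_{10}$.
   Context: For a finite set $W$, $P_W=\{pq\in W^2\mid p\neq q\}$ and $X_W$ is the set of $x\in\{0,1\}^{P_W}$ with $x_{pq}+x_{qr}-x_{pr}\le1$ for all pairwise distinct $p,q,r\in W$. A partial function $\tilde x$ on $P_W$ is a map from $\operatorname{dom}(\tilde x)\subseteq P_W$ to $\{0,1\}$, $\tilde x^{-1}(b)$ the pairs mapped to $b$, $X_W[\tilde x]=\{x\in X_W\mid x_{pq}=\tilde x_{pq}\ \forall pq\in\operatorname{dom}(\tilde x)\}$; convention $\tilde x_{aa}=1$, $x_{aa}=1$, $y_{aa}=1$ for all $a$. A pair is decided if it has the same value in all completions; $\tilde x$ is maximally specific if $X_W[\tilde x]\ne\emptyset$ and the decided pairs are exactly $\operatorname{dom}(\tilde x)$. $\hat x|_{P_U}$ has domain $\operatorname{dom}(\hat x)\cap P_U$. $\delta(U)=(U\times(V\setminus U))\cup((V\setminus U)\times U)$. For $x\in X_V[\hat x]$ define vectors in $\{0,1\}^{P_V}$: $\tau^y_{\mathrm{out}}(x)_{pq}$ equals $y_{pq}$ if $pq\in P_U$; $0$ if $pq\in U\times(V\setminus U)$; for $pq\in(V\setminus U)\times U$, $1$ if $\exists r\in U: x_{pr}=1\wedge y_{rq}=1$ and $0$ otherwise; $x_{pq}$ if $pq\in P_{V\setminus U}$. $\tau^y_{\mathrm{in}}(x)_{pq}$ equals $y_{pq}$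 if $pq\in P_U$; $0$ if $pq\in(V\setminus U)\times U$; for $pq\in U\times(V\setminus U)$, $1$ if $\exists r\in U: y_{pr}=1\wedge x_{rq}=1$ and $0$ otherwise; $x_{pq}$ if $pq\in P_{V\setminus U}$. $\tau^y_{\mathrm{bd}}(x)_{pq}$ equals $y_{pq}$ if $pq\in P_U$; $0$ if $pq\in\delta(U)$; $x_{pq}$ if $pq\in P_{V\setminus U}$. For a map $\tau$ on $X_V[\hat x]$ and $a,b\in\{0,1\}$, $P_{ab}[\tau]=\{e\in P_V\mid\exists x\in X_V[\hat x]: x_e=a\wedge\tau(x)_e=b\}$. *)

(* V is modelled as the whole finite type T (V = [set: T]). *)
From mathcomp Require Import all_boot.
Set Implicit Arguments. Unset Strict Implicit. Unset Printing Implicit Defensive.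

Section Defs.
Variable T : finType.

Definition pairs (W : {set T}) (p q : T) : Prop := [/\ p \in W, q \in W & p != q].

(* x \in X_W : a 0/1 vector on P_W, represented as T -> T -> bool with the
   convention x_aa = 1; values outside P_W (and off the diagonal) are irrelevant. *)
Definition inX (W : {set T}) (x : T -> T -> bool) : Prop :=
  (forall a, x a a = true) /\
  (forall p q r, p \in W -> q \in W -> r \in W -> p != q -> q != r -> p != r ->
     (x p q + x q r <= 1 + x p r)%N).

Definition ptl := T -> T -> option bool.

Definition is_partial (W : {set T}) (xt : ptl) : Prop :=
  forall p q, xt p q <> None -> pairs W p q.

Definition inXc (W : {set T}) (xt : ptl) (x : T -> T -> bool) : Prop :=
  inX W x /\ forall p q b, pairs W p q -> xt p q = Some b -> x p q = b.

Definition decided (W : {set T}) (xt : ptl) (p q : T) : Prop :=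
  forall x x', inXc W xt x -> inXc W xt x' -> x p q = x' p q.

Definition max_specific (W : {set T}) (xt : ptl) : Prop :=
  [/\ is_partial W xt, exists x, inXc W xt x &
      forall p q, pairs W p q -> (decided W xt p q <-> xt p q <> None)].

Definition restr (U : {set T}) (xt : ptl) : ptl :=
  fun p q => if (p \in U) && (q \in U) then xt p q else None.

Definition delta (U : {set T}) (p q : T) : Prop :=
  ((p \in U) && (q \notin U)) || ((p \notin U) && (q \in U)).

Definition tau_out (U : {set T}) (y x : T -> T -> bool) : T -> T -> bool :=
  fun p q =>
    if (p \in U) && (q \in U) then y p q
    else if (p \in U) && (q \notin U) then false
    else if (p \notin U) && (q \in U) then [exists r in U, x p r && y r q]
    else x p q.

Definition tau_in (U : {set T}) (y x : T -> T -> bool) : T -> T -> bool :=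
  fun p q =>
    if (p \in U) && (q \in U) then y p q
    else if (p \notin U) && (q \in U) then false
    else if (p \in U) && (q \notin U) then [exists r in U, y p r && x r q]
    else x p q.

Definition tau_bd (U : {set T}) (y x : T -> T -> bool) : T -> T -> bool :=
  fun p q =>
    if (p \in U) && (q \in U) then y p q
    else if ((p \in U) && (q \notin U)) || ((p \notin U) && (q \in U)) then false
    else x p q.

Definition Pab (xhat : ptl) (tau : (T -> T -> bool) -> T -> T -> bool)
    (a b : bool) (p q : T) : Prop :=
  pairs [set: T] p q /\
  exists x, inXc [set: T] xhat x /\ x p q = a /\ tau x p q = b.

Definition P01'_out (U : {set T}) (xhat : ptl) (y : T -> T -> bool) p q : Prop :=
  [/\ p \notin U, q \in U,
      (exists2 r, r \in U & xhat p r <> Some false /\ y r q = true)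
    & xhat p q <> Some true].
Definition P01''_out (U : {set T}) (xhat : ptl) p q : Prop :=
  [/\ p \notin U, q \in U & xhat p q <> Some true].
Definition P10'_out (U : {set T}) (xhat : ptl) p q : Prop :=
  [/\ p \in U, q \notin U & xhat p q <> Some false].
Definition P10''_out (U : {set T}) (xhat : ptl) p q : Prop :=
  [/\ p \in U, q \notin U & xhat p q <> Some false].

Definition P01'_in (U : {set T}) (xhat : ptl) (y : T -> T -> bool) p q : Prop :=
  [/\ p \in U, q \notin U,
      (exists2 r, r \in U & y p r = true /\ xhat r q <> Some false)
    & xhat p q <> Some true].
Definition P01''_in (U : {set T}) (xhat : ptl) p q : Prop :=
  [/\ p \in U, q \notin U & xhat p q <> Some true].
Definition P10'_in (U : {set T}) (xhat : ptl) p q : Prop :=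
  [/\ p \notin U, q \in U & xhat p q <> Some false].
Definition P10''_in (U : {set T}) (xhat : ptl) p q : Prop :=
  [/\ p \notin U, q \in U & xhat p q <> Some false].

Definition P01'_bd (p q : T) : Prop := False.
Definition P01''_bd (p q : T) : Prop := False.
Definition P10'_bd (U : {set T}) (xhat : ptl) p q : Prop :=
  delta U p q /\ xhat p q <> Some false.
Definition P10''_bd (U : {set T}) (xhat : ptl) p q : Prop :=
  delta U p q /\ xhat p q <> Some false.

End Defs.

From mathcomp Require Import all_boot.

Set Implicit Arguments. Unset Strict Implicit. Unset Printing Implicit Defensive.

(* A completion x of xhat agrees with xhat on its domain, so x_pq = a forces
   xhat_pq <> 1 - a; this bounds the pairs of P_ab[tau]. On delta(U) each tau
   vanishes except on one side of the cut, where it is an existential over U;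
   when x_pq = 1 that existential is witnessed by r = q (resp. r = p), because
   y is reflexive, so no such pair can go from 1 to 0. *)

Section Cut.
Variables (T : finType) (U : {set T}) (y : T -> T -> bool).

Lemma delta_in_l p q : delta U p q -> (p \in U) = (q \notin U).
Proof. by rewrite /delta; case: (p \in U); case: (q \in U). Qed.

Lemma delta_in_r p q : delta U p q -> (q \in U) = (p \notin U).
Proof. by rewrite /delta; case: (p \in U); case: (q \in U). Qed.

Lemma tau_out_delta x p q : delta U p q ->
  tau_out U y x p q = (p \notin U) && [exists r in U, x p r && y r q].
Proof. by rewrite /delta /tau_out; case: (p \in U); case: (q \in U). Qed.

Lemma tau_in_delta x p q : delta U p q ->
  tau_in U y x p q = (q \notin U) && [exists r in U, y p r && x r q].
Proof. by rewrite /delta /tau_in; case: (p \in U); case: (q \in U). Qed.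

Lemma tau_bd_delta x p q : delta U p q -> tau_bd U y x p q = false.
Proof. by rewrite /delta /tau_bd; case: (p \in U); case: (q \in U). Qed.

End Cut.

Section Transitions.
Variables (T : finType) (U : {set T}) (xhat : ptl T) (y : T -> T -> bool).

Lemma inXc_ptl_neq x p q :
  inXc [set: T] xhat x -> p != q -> xhat p q <> Some (~~ x p q).
Proof.
case=> _ agree pq E.
by move: (agree p q _ (And3 (in_setT p) (in_setT q) pq) E); case: (x p q).
Qed.

Lemma Pab_ptl_neq tau a b p q : Pab xhat tau a b p q -> xhat p q <> Some (~~ a).
Proof. by case=> [[_ _ pq] [x [xP [<- _]]]]; exact: inXc_ptl_neq. Qed.

Lemma Pab_out_01 p q :
  Pab xhat (tau_out U y) false true p q -> delta U p q -> P01'_out U xhat y p q.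
Proof.
move=> P01 dpq; have xhat_pq := Pab_ptl_neq P01.
case: P01 => _ [x [xP [_]]]; rewrite tau_out_delta // => /andP[pU].
case/exists_inP=> r rU /andP[xpr yrq].
have pr : p != r by apply: contraNneq pU => ->.
split=> //; first by rewrite (delta_in_r dpq).
by exists r => //; split=> //; move: (inXc_ptl_neq xP pr); rewrite xpr.
Qed.

Lemma Pab_in_01 p q :
  Pab xhat (tau_in U y) false true p q -> delta U p q -> P01'_in U xhat y p q.
Proof.
move=> P01 dpq; have xhat_pq := Pab_ptl_neq P01.
case: P01 => _ [x [xP [_]]]; rewrite tau_in_delta // => /andP[qU].
case/exists_inP=> r rU /andP[ypr xrq].
have rq : r != q by apply: contraNneq qU => <-.
split=> //; first by rewrite (delta_in_l dpq).
by exists r => //; split=> //; move: (inXc_ptl_neq xP rq); rewrite xrq.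
Qed.

Lemma Pab_bd_01 p q : Pab xhat (tau_bd U y) false true p q -> ~ delta U p q.
Proof. by case=> _ [x [_ [_ tpq]]] dpq; rewrite tau_bd_delta in tpq. Qed.

Lemma Pab_bd_10 p q :
  Pab xhat (tau_bd U y) true false p q -> delta U p q -> P10'_bd U xhat p q.
Proof. by move=> P10 dpq; split=> //; exact: Pab_ptl_neq P10. Qed.

Hypothesis y_refl : forall a, y a a.

Lemma Pab_out_10 p q :
  Pab xhat (tau_out U y) true false p q -> delta U p q -> P10'_out U xhat p q.
Proof.
move=> P10 dpq; have xhat_pq := Pab_ptl_neq P10.
case: P10 => _ [x [_ [xpq]]]; rewrite tau_out_delta //.
have [pU _ | pU] := boolP (p \in U).
  by split=> //; rewrite (delta_in_r dpq) pU.
have qU : q \in U by rewrite (delta_in_r dpq).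
by move=> /= /negbT/exists_inPn/(_ q qU); rewrite xpq y_refl.
Qed.

Lemma Pab_in_10 p q :
  Pab xhat (tau_in U y) true false p q -> delta U p q -> P10'_in U xhat p q.
Proof.
move=> P10 dpq; have xhat_pq := Pab_ptl_neq P10.
case: P10 => _ [x [_ [xpq]]]; rewrite tau_in_delta //.
have [qU _ | qU] := boolP (q \in U).
  by split=> //; rewrite (delta_in_l dpq) qU.
have pU : p \in U by rewrite (delta_in_l dpq).
by move=> /= /negbT/exists_inPn/(_ p pU); rewrite xpq y_refl.
Qed.

End Transitions.

Theorem lemma7p3 (T : finType) (U : {set T}) (xhat : ptl T) (y : T -> T -> bool) :
  (0 < #|T|)%N ->
  max_specific [set: T] xhat ->
  inXc U (restr U xhat) y ->
  (* (1) tau_out *)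
  ((forall p q, Pab xhat (tau_out U y) false true p q -> delta U p q ->
       P01'_out U xhat y p q) /\
   (forall p q, P01'_out U xhat y p q -> P01''_out U xhat p q) /\
   (forall p q, Pab xhat (tau_out U y) true false p q -> delta U p q ->
       P10'_out U xhat p q) /\
   (forall p q, P10'_out U xhat p q <-> P10''_out U xhat p q)) /\
  (* (2) tau_in *)
  ((forall p q, Pab xhat (tau_in U y) false true p q -> delta U p q ->
       P01'_in U xhat y p q) /\
   (forall p q, P01'_in U xhat y p q -> P01''_in U xhat p q) /\
   (forall p q, Pab xhat (tau_in U y) true false p q -> delta U p q ->
       P10'_in U xhat p q) /\
   (forall p q, P10'_in U xhat p q <-> P10''_in U xhat p q)) /\
  (* (3) tau_bd *)
  ((forall p q, Pab xhat (tau_bd U y) false true p q -> delta U p q ->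
       @P01'_bd T p q) /\
   (forall p q, @P01'_bd T p q <-> @P01''_bd T p q) /\
   (forall p q, Pab xhat (tau_bd U y) true false p q -> delta U p q ->
       P10'_bd U xhat p q) /\
   (forall p q, P10'_bd U xhat p q <-> P10''_bd U xhat p q)).
Proof.
move=> _ _ [[y_refl _] _].
split; [|split]; (split; [|split; [|split]]) => //.
- exact: Pab_out_01.
- by move=> p q [].
- exact: Pab_out_10.
- exact: Pab_in_01.
- by move=> p q [].
- exact: Pab_in_10.
- by move=> p q /Pab_bd_01.
- exact: Pab_bd_10.
Qed.
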